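(* Let $G$ be a group with neutral element $e$, $R$ a unital ring, and $\alpha=(\{D_g\}_{g\in G},\{\alpha_g\}_{g\in G})$ a unital partial action of $G$ on $R$, with $1_g$ the multiplicative identity of $D_g$. Assume (a) $D_gD_h=(0)$ for all $g,h\in G$ with $g\ne h$ and $g,h\ne e$, and (b) the set $\{1_g\mid g\in G\}$ is finite. Then for every normal subgroup $N$ of $G$, the induced $G/N$-grading of the partial skew group ring $R\star_\alpha G=\bigoplus_{g\in G}D_g\delta_g$ makes it an epsilon-crossed product.
   Context: A unital partial action of $G$ on $R$ consists of unital ideals $D_g$ of $R$ and ring isomorphisms $\alpha_g\colon D_{g^{-1}}\to D_g$ such that $D_e=R$, $\alpha_e=\mathrm{id}_R$, $\alpha_g(D_{g^{-1}}D_h)=D_gD_{gh}$ for all $g,h$, and $\alpha_g(\alpha_h(x))=\alpha_{gh}(x)$ for all $x\in D_{h^{-1}}D_{(gh)^{-1}}$. The partial skew group ring $R\star_\alpha G=\bigoplus_gD_g\delta_g$ ($\delta_g$ formal symbols) has multiplication $(a_g\delta_g)(b_h\delta_h)=a_g\alpha_g(b_h1_{g^{-1}})\delta_{gh}$, and is $G$-graded by $\{D_g\delta_g\}$. The induced $G/N$-grading is $S_C=\bigoplus_{g\in C}D_g\delta_g$. A grading $\{T_h\}_{h\in H}$ is epsilon-strong if $T_hT_{h^{-1}}T_h=T_h$ for all $h$ ($AB$ = finite sums of products) and each $T_hT_{h^{-1}}$ has a multiplicative identity $\epsilon_h$. An element $s\in T_h$ is epsilon-invertible if there is $t\in T_{h^{-1}}$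 with $st=\epsilon_h$ and $ts=\epsilon_{h^{-1}}$. An epsilon-crossed product is an epsilon-strongly graded ring in which every $T_h$ contains an epsilon-invertible element. *)

From HB Require Import structures.
From mathcomp Require Import all_boot all_algebra.
From mathcomp Require Import monoid.
From mathcomp Require Import boolp classical_sets cardinality fsbigop.

Set Implicit Arguments.
Unset Strict Implicit.
Unset Printing Implicit Defensive.

Import GRing.Theory.
Local Open Scope ring_scope.
Local Open Scope classical_set_scope.

Notation gmul := (@monoid.mul _).
Notation ginv := (@monoid.inv _).
Notation gone := (@monoid.one _).

Section RingIdeals.
Variable R : pzRingType.

Definition is_ideal (I : set R) : Prop :=
  [/\ I 0, (forall x y, I x -> I y -> I (x - y)),
      (forall r x, I x -> I (r * x)) & (forall r x, I x -> I (x * r))].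

Definition is_identity_of (I : set R) (u : R) : Prop :=
  I u /\ (forall x, I x -> u * x = x /\ x * u = x).

Definition unital_ideal (I : set R) : Prop :=
  is_ideal I /\ exists u, is_identity_of I u.

Definition setprod (A B : set R) : set R :=
  fun z => exists s : seq (R * R),
    (forall p, p \in s -> A p.1 /\ B p.2) /\ z = \sum_(p <- s) p.1 * p.2.

End RingIdeals.

Section PartialAction.
Variables (G : groupType) (R : pzRingType).

(* alpha_g : D_{g^-1} -> D_g is a ring isomorphism (alpha is given as a
   total function R -> R; only its values on D_{g^-1} matter). *)
Definition ring_iso_on (A B : set R) (f : R -> R) : Prop :=
  [/\ (forall x, A x -> B (f x)),
      (forall x y, A x -> A y -> f (x + y) = f x + f y),
      (forall x y, A x -> A y -> f (x * y) = f x * f y),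
      (forall x y, A x -> A y -> f x = f y -> x = y)
    & (forall y, B y -> exists2 x, A x & f x = y)].

Definition unital_partial_action (D : G -> set R) (alpha : G -> R -> R) : Prop :=
  [/\ (forall g, unital_ideal (D g)),
      (forall g, ring_iso_on (D (ginv g)) (D g) (alpha g)),
      D gone = setT /\ (forall x, alpha gone x = x),
      (forall g h, (alpha g @` setprod (D (ginv g)) (D h))
                   = setprod (D g) (D (gmul g h)))
    & (forall g h x, setprod (D (ginv h)) (D (ginv (gmul g h))) x ->
         alpha g (alpha h x) = alpha (gmul g h) x)].

(* The partial skew group ring R *_alpha G = (+)_g D_g delta_g, realised as
   the finitely supported functions a : G -> R with a g \in D_g
   (a = \sum_g (a g) delta_g). *)
Definition skew_elem (D : G -> set R) (a : G -> R) : Prop :=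
  finite_set [set g | a g != 0] /\ (forall g, D g (a g)).

(* Multiplication: (a_g delta_g)(b_h delta_h) = a_g alpha_g(b_h 1_{g^-1}) delta_{gh},
   extended bilinearly; coefficient at k collects the pairs (g, g^-1 k). *)
Definition skew_mul (alpha : G -> R -> R) (one1 : G -> R) (a b : G -> R) : G -> R :=
  fun k => \sum_(g \in [set: G]) a g * alpha g (b (gmul (ginv g) k) * one1 (ginv g)).

Definition skew_setprod (alpha : G -> R -> R) (one1 : G -> R)
    (A B : set (G -> R)) : set (G -> R) :=
  fun z => exists s : seq ((G -> R) * (G -> R)),
    (forall p, p \in s -> A p.1 /\ B p.2) /\
    z = (fun k => \sum_(p <- s) skew_mul alpha one1 p.1 p.2 k).

Definition normal_subgroup (N : set G) : Prop :=
  [/\ N gone, (forall x y, N x -> N y -> N (gmul x y)),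
      (forall x, N x -> N (ginv x))
    & (forall x y, N y -> N (gmul (ginv x) (gmul y x)))].

(* homogeneous component of the induced G/N-grading for the coset xN:
   S_{xN} = (+)_{g in xN} D_g delta_g *)
Definition coset_component (D : G -> set R) (N : set G) (x : G) : set (G -> R) :=
  fun a => skew_elem D a /\ (forall g, a g != 0 -> N (gmul (ginv x) g)).

End PartialAction.

Section EpsilonStrong.
(* A grading {T_i} of a ring with multiplication [mul] and subset product
   [sprod], indexed by a group with inversion [invI]. *)
Variables (S I : Type) (mul : S -> S -> S) (sprod : set S -> set S -> set S)
          (invI : I -> I) (T : I -> set S).

Definition eps_unit (i : I) (e : S) : Prop :=
  sprod (T i) (T (invI i)) e /\
  (forall z, sprod (T i) (T (invI i)) z -> mul e z = z /\ mul z e = z).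

Definition epsilon_strong : Prop :=
  forall i, sprod (sprod (T i) (T (invI i))) (T i) = T i /\
            exists e, eps_unit i e.

Definition epsilon_crossed_product : Prop :=
  epsilon_strong /\
  forall i, exists s, T i s /\ exists t, T (invI i) t /\
     exists ei eiv, eps_unit i ei /\ eps_unit (invI i) eiv /\
                    mul s t = ei /\ mul t s = eiv.

End EpsilonStrong.

From HB Require Import structures.
From mathcomp Require Import all_boot all_algebra.
From mathcomp Require Import monoid.
From mathcomp Require Import boolp classical_sets functions cardinality fsbigop.

Set Implicit Arguments.
Unset Strict Implicit.
Unset Printing Implicit Defensive.

Import GRing.Theory.
Local Open Scope ring_scope.
Local Open Scope classical_set_scope.

(* By (a) the identities 1_g, g <> e, are orthogonal idempotents, so by (b)
   only finitely many of them are nonzero.  Hence for a coset xN <> N the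
   element s = sum_{g in xN} 1_g delta_g lies in S_{xN}, and its product with
   the analogous element of S_{x^-1 N} is (sum_{g in xN} 1_g) delta_e: every
   coefficient away from e is a product from D_g D_k with g <> k, both
   different from e.  The same argument shows that S_{xN} S_{x^-1 N} is
   concentrated in degree e, with coefficients in the sum of the D_g, g in xN,
   on which sum_{g in xN} 1_g acts as the identity.  For the coset N itself,
   s = 1 delta_e does the job. *)

Section Ideals.
Variables (R : pzRingType) (I : set R).
Hypothesis idealI : is_ideal I.

Lemma ideal0 : I 0.
Proof. by case: idealI. Qed.

Lemma idealN x : I x -> I (- x).
Proof.
by case: idealI => _ idealB _ _ Ix; rewrite -sub0r; apply: idealB => //; apply: ideal0.
Qed.

Lemma idealD x y : I x -> I y -> I (x + y).
Proof.
by case: idealI => _ idealB _ _ Ix Iy; rewrite -[y]opprK; apply: idealB => //; apply: idealN.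
Qed.

Lemma idealMl r x : I x -> I (r * x).
Proof. by case: idealI => _ _ idealM _; apply: idealM. Qed.

Lemma idealMr r x : I x -> I (x * r).
Proof. by case: idealI => _ _ _ idealM; apply: idealM. Qed.

Lemma ideal_sum (T : eqType) (r : seq T) (F : T -> R) :
  (forall i, i \in r -> I (F i)) -> I (\sum_(i <- r) F i).
Proof.
by move=> IF; rewrite big_seq; apply: big_ind => //; [exact: ideal0 | exact: idealD].
Qed.

Variable e : R.
Hypothesis eI : is_identity_of I e.

Lemma identity_mull x : I x -> e * x = x.
Proof. by case: eI => _ /(_ x) eIx /eIx []. Qed.

Lemma identity_mulr x : I x -> x * e = x.
Proof. by case: eI => _ /(_ x) eIx /eIx []. Qed.

Lemma identity_idem : e * e = e.
Proof. by apply: identity_mull; case: eI. Qed.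

Lemma identity_central r : e * r = r * e.
Proof.
have Ie : I e by case: eI.
by rewrite -[LHS](identity_mulr (idealMr r Ie)) -mulrA identity_mull //; apply: idealMl.
Qed.

End Ideals.

Lemma setprod_mul (R : pzRingType) (A B : set R) x y : A x -> B y -> setprod A B (x * y).
Proof.
move=> Ax By; exists [:: (x, y)]; split; last by rewrite big_seq1.
by move=> p; rewrite inE => /eqP ->.
Qed.

Lemma setprod_subr (R : pzRingType) (A B : set R) : is_ideal B -> setprod A B `<=` B.
Proof. by move=> idealB _ [s [sAB ->]]; apply: ideal_sum => // p /sAB [_]; apply: idealMl. Qed.

Lemma finite_orthogonal_idempotents (T : Type) (R : pzRingType) (S : set T) (u : T -> R) :
  (forall g, u g * u g = u g) ->
  (forall g h, S g -> S h -> g <> h -> u g * u h = 0) ->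
  finite_set (range u) -> finite_set [set g | S g /\ u g != 0].
Proof.
move=> idem orth fin_u; set S' := [set g | _].
have inj : {in S' &, injective u}.
  move=> g h /set_mem [Sg ug] /set_mem [Sh _] ugh; apply: contrapT => gh.
  by move: ug; rewrite -idem {2}ugh orth ?eqxx.
rewrite -(eq_finite_set (inj_card_eq inj)).
by apply: sub_finite_set fin_u => _ [g _ <-]; exists g.
Qed.

Lemma epsilon_crossed_product_of_section (S I : Type) (mul : S -> S -> S)
    (sprod : set S -> set S -> set S) (invI : I -> I) (T : I -> set S) (s : I -> S) :
  involutive invI -> (forall i, T i (s i)) ->
  (forall i, eps_unit mul sprod invI T i (mul (s i) (s (invI i)))) ->
  (forall i, sprod (sprod (T i) (T (invI i))) (T i) = T i) ->
  epsilon_crossed_product mul sprod invI T.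
Proof.
move=> invIK Ts eps_s strongT; split=> i.
  by split; last exists (mul (s i) (s (invI i))).
exists (s i); split=> //; exists (s (invI i)); split=> //.
exists (mul (s i) (s (invI i))), (mul (s (invI i)) (s (invI (invI i)))).
by rewrite invIK; split=> //; have := eps_s (invI i); rewrite invIK.
Qed.

Section NormalSubgroup.
Variables (G : groupType) (N : set G).
Hypothesis normalN : normal_subgroup N.

Definition lcoset (x : G) : set G := [set g | N (gmul (ginv x) g)].

Lemma normalM g h : N g -> N h -> N (gmul g h).
Proof. by case: normalN => _ nM _ _; apply: nM. Qed.

Lemma normalV g : N g -> N (ginv g).
Proof. by case: normalN => _ _ nV _; apply: nV. Qed.

Lemma normalJ x g : N g -> N (gmul (ginv x) (gmul g x)).
Proof. by case: normalN => _ _ _ nJ; apply: nJ. Qed.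

Lemma normal_mulC g h : N (gmul g h) -> N (gmul h g).
Proof. by move=> /(normalJ g); rewrite mulgA mulKg. Qed.

Lemma normalVE x : N (ginv x) <-> N x.
Proof. by split=> /normalV; rewrite ?invgK. Qed.

Lemma lcoset1 x : lcoset x gone <-> N x.
Proof. by rewrite /lcoset /= mulg1; apply: normalVE. Qed.

Lemma lcoset_neq1 x g : ~ N x -> lcoset x g -> g != gone.
Proof. by move=> Nx xg; apply/eqP => g1; apply/Nx/lcoset1; rewrite -g1. Qed.

Lemma lcosetV x g : lcoset x g -> lcoset (ginv x) (ginv g).
Proof. by move=> /normal_mulC /normalV; rewrite /lcoset /= invgK invgM invgK. Qed.

Lemma lcoset_mulV x : [set gmul g h | g in lcoset x & h in lcoset (ginv x)] `<=` N.
Proof.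
move=> _ [g /normal_mulC xg [h xh <-]]; move: xh; rewrite /lcoset /= invgK => xh.
by move: (normalM xg xh); rewrite -mulgA mulKg.
Qed.

Lemma normal_mul_lcoset x : [set gmul g h | g in N & h in lcoset x] `<=` lcoset x.
Proof.
move=> _ [g /(normalJ x) Ng [h xh <-]]; move: (normalM Ng xh).
by rewrite /lcoset /= -mulgA -(mulgA g) mulVKg.
Qed.

End NormalSubgroup.

Section PartialAction.
Variables (G : groupType) (R : pzRingType) (D : G -> set R) (alpha : G -> R -> R) (u : G -> R).
Hypothesis pa : unital_partial_action D alpha.
Hypothesis unit_u : forall g, is_identity_of (D g) (u g).

Lemma D_ideal g : is_ideal (D g).
Proof. by case: pa => /(_ g) []. Qed.

Lemma D_unit g : D g (u g).
Proof. by case: (unit_u g). Qed.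

Lemma D1 x : D gone x.
Proof. by case: pa => _ _ [-> _]. Qed.

Lemma unit1 : u gone = 1.
Proof. by rewrite -[u gone]mulr1 (identity_mull (unit_u gone)) //; apply: D1. Qed.

Lemma alpha1 x : alpha gone x = x.
Proof. by case: pa => _ _ [_ ->]. Qed.

Lemma alpha_in g x : D (ginv g) x -> D g (alpha g x).
Proof. by case: pa => _ /(_ g) [alpha_g _ _ _ _] _ _ _; apply: alpha_g. Qed.

Lemma alpha0 g : alpha g 0 = 0.
Proof.
case: pa => _ /(_ g) [_ alphaD _ _ _] _ _ _.
have D0 := ideal0 (D_ideal (ginv g)).
by apply: (addrI (alpha g 0)); rewrite addr0 -alphaD ?addr0.
Qed.

Lemma alpha_unit g : alpha g (u (ginv g)) = u g.
Proof.
case: pa => _ /(_ g) [_ _ alphaM _ alpha_onto] _ _ _.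
rewrite -[LHS](identity_mulr (unit_u g) (alpha_in (D_unit _))).
have [y Dy <-] := alpha_onto _ (D_unit g).
by rewrite -alphaM ?(identity_mull (unit_u _)) //; apply: D_unit.
Qed.

(* This is the partial action axiom alpha_g(D_{g^-1} D_{g^-1 k}) = D_g D_k. *)
Lemma alpha_mul_unit g k b : D (gmul (ginv g) k) b ->
  setprod (D g) (D k) (alpha g (b * u (ginv g))).
Proof.
move=> Db; case: pa => _ _ _ alpha_setprod _.
rewrite -[k](mulVKg g) -alpha_setprod; exists (u (ginv g) * b).
  exact/setprod_mul/Db/D_unit.
by rewrite (identity_central (D_ideal _) (unit_u _)).
Qed.

Local Notation mul := (skew_mul alpha u).
Local Notation sprod := (skew_setprod alpha u).

Lemma skew_setprod_mul (A B : set (G -> R)) a b : A a -> B b -> sprod A B (mul a b).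
Proof.
move=> Aa Bb; exists [:: (a, b)]; split; last by apply: funext => k; rewrite big_seq1.
by move=> p; rewrite inE => /eqP ->.
Qed.

Definition delta1 (c : R) : G -> R := fun g => if g == gone then c else 0.

Lemma skew_mul_delta1l c b k : mul (delta1 c) b k = c * b k.
Proof.
rewrite /skew_mul -(fsbig_widen [set gone]) // ?fsbig_set1.
  by rewrite /delta1 eqxx invg1 mul1g unit1 mulr1 alpha1.
by move=> g [_ /eqP]; rewrite /delta1 /= => /negbTE ->; rewrite mul0r.
Qed.

Lemma skew_mul_delta1r b c k : mul b (delta1 c) k = b k * alpha k (c * u (ginv k)).
Proof.
rewrite /skew_mul -(fsbig_widen [set k]) // ?fsbig_set1; first by rewrite /delta1 mulVg eqxx.
move=> g [_ /eqP gk]; rewrite /delta1 /=.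
case: eqP => [/eqP|_]; last by rewrite mul0r alpha0 mulr0.
by rewrite mulg_eq1 eqg_inv (negbTE gk).
Qed.

Lemma skew_mul1l b : mul (delta1 1) b = b.
Proof. by apply: funext => k; rewrite skew_mul_delta1l mul1r. Qed.

Lemma skew_mul1r b : skew_elem D b -> mul b (delta1 1) = b.
Proof.
case=> _ Db; apply: funext => k.
by rewrite skew_mul_delta1r mul1r alpha_unit (identity_mulr (unit_u k)).
Qed.

Lemma skew_mul_neq0 a b k : mul a b k != 0 ->
  exists2 g, a g != 0 & b (gmul (ginv g) k) != 0.
Proof.
move=> /eqP abk; apply: contrapT => no_g; apply: abk; apply: fsbig1 => g _.
have [->|ag] := eqVneq (a g) 0; first by rewrite mul0r.
have [->|bg] := eqVneq (b (gmul (ginv g) k)) 0; first by rewrite mul0r alpha0 mulr0.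
by exfalso; apply: no_g; exists g.
Qed.

Definition supported_in (S : set G) (a : G -> R) : Prop :=
  skew_elem D a /\ (forall g, a g != 0 -> S g).

Lemma supported_sub S S' : S `<=` S' -> supported_in S `<=` supported_in S'.
Proof. by move=> SS' a [Da Sa]; split=> // g /Sa /SS'. Qed.

Lemma supported0 S : supported_in S (fun=> 0).
Proof.
split; last by move=> g; rewrite eqxx.
split=> [|g]; last exact: ideal0 (D_ideal g).
by apply: sub_finite_set (finite_set0 G) => g /=; rewrite eqxx.
Qed.

Lemma supportedD S a b : supported_in S a -> supported_in S b ->
  supported_in S (fun k => a k + b k).
Proof.
move=> [[fa Da] Sa] [[fb Db] Sb]; split; first split.
- have fab : finite_set ([set g | a g != 0] `|` [set g | b g != 0]) by rewrite finite_setU.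
  apply: sub_finite_set fab => k /=.
  by have [->|] := eqVneq (a k) 0; [rewrite add0r; right | left].
- by move=> k; apply: (idealD (D_ideal k)).
- by move=> k; have [->|/Sa //] := eqVneq (a k) 0; rewrite add0r => /Sb.
Qed.

Lemma supported_sum S (T : eqType) (s : seq T) (f : T -> G -> R) :
  (forall p, p \in s -> supported_in S (f p)) ->
  supported_in S (fun k => \sum_(p <- s) f p k).
Proof.
elim: s => [|p s IHs] Sf.
  by under [X in supported_in S X]funext do rewrite big_nil; apply: supported0.
under [X in supported_in S X]funext do rewrite big_cons.
apply: supportedD; first by apply: Sf; rewrite mem_head.
by apply: IHs => q qs; apply: Sf; rewrite inE qs orbT.
Qed.

Lemma supported_mul S S' a b : supported_in S a -> supported_in S' b ->
  supported_in [set gmul g h | g in S & h in S'] (mul a b).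
Proof.
move=> [[fa Da] Sa] [[fb Db] Sb]; split; first split.
- apply: sub_finite_set (finite_image2 gmul fa fb) => k /= /skew_mul_neq0 [g ag bg].
  by exists g => //; exists (gmul (ginv g) k) => //; rewrite mulVKg.
- move=> k; apply: (ideal_sum (D_ideal k)) => g _; apply: (idealMl (D_ideal k)).
  exact/(setprod_subr (D_ideal k))/alpha_mul_unit/Db.
- move=> k /skew_mul_neq0 [g /Sa Sg /Sb S'g].
  by exists g => //; exists (gmul (ginv g) k) => //; rewrite mulVKg.
Qed.

Lemma skew_setprod_supported (A B : set (G -> R)) S S' :
  A `<=` supported_in S -> B `<=` supported_in S' ->
  sprod A B `<=` supported_in [set gmul g h | g in S & h in S'].
Proof.
move=> AS BS' _ [s [sAB ->]]; apply: supported_sum => p /sAB [/AS Sa /BS' Sb].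
exact: supported_mul.
Qed.

Hypothesis D_orth :
  forall g h, g != h -> g != gone -> h != gone -> setprod (D g) (D h) = [set 0].
Hypothesis finite_range_u : finite_set (range u).

Lemma mul_orth g h x y : g != h -> g != gone -> h != gone -> D g x -> D h y -> x * y = 0.
Proof. by move=> gh g1 h1 Dx Dy; have := setprod_mul Dx Dy; rewrite D_orth. Qed.

Lemma finite_unit_support : finite_set [set g | g != gone /\ u g != 0].
Proof.
apply: (finite_orthogonal_idempotents (S := fun g => g != gone)) finite_range_u.
  by move=> g; apply: (identity_idem (unit_u g)).
by move=> g h g1 h1 /eqP gh; apply: mul_orth gh g1 h1 (D_unit g) (D_unit h).
Qed.

(* Only the terms g = e and g = k of (a b)(k) can survive orthogonality. *)
Lemma skew_mul_orth a b k : skew_elem D b -> a gone = 0 -> b gone = 0 -> k != gone ->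
  mul a b k = 0.
Proof.
move=> [_ Db] a1 b1 k1; apply: fsbig1 => g _.
have [->|ag] := eqVneq (a g) 0; first by rewrite mul0r.
have g1 : g != gone by apply: contra_neq ag => ->.
have [->|gk] := eqVneq g k; first by rewrite mulVg b1 mul0r alpha0 mulr0.
by have := alpha_mul_unit (Db (gmul (ginv g) k)); rewrite D_orth // => ->; rewrite mulr0.
Qed.

Variable N : set G.
Hypothesis normalN : normal_subgroup N.

Lemma coset_componentE x : coset_component D N x = supported_in (lcoset N x).
Proof. by []. Qed.

Lemma coset_component1 x a : ~ N x -> coset_component D N x a -> a gone = 0.
Proof. by move=> Nx [_ xa]; apply/eqP; apply: contraT => /xa /(lcoset1 normalN). Qed.

Definition coset_unit x : R := \sum_(g \in lcoset N x) u g.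

Lemma coset_unit_fixes x h y : ~ N x -> lcoset N x h -> D h y ->
  coset_unit x * y = y /\ y * coset_unit x = y.
Proof.
move=> Nx xh Dy; have [->|y0] := eqVneq y 0; first by rewrite mulr0 mul0r.
have uh : u h != 0.
  by apply: contra_neq y0 => uh0; rewrite -(identity_mull (unit_u h) Dy) uh0 mul0r.
have fin : finite_set (lcoset N x `&` u @^-1` [set~ 0]).
  apply: sub_finite_set finite_unit_support => g [xg /eqP ug]; split=> //.
  exact: (lcoset_neq1 normalN Nx xg).
have hs : h \in finite_support 0 (lcoset N x) u.
  by rewrite in_finite_support // inE; split=> //; apply/eqP.
have orth_h g : g \in finite_support 0 (lcoset N x) u -> g != h ->
    u g * y = 0 /\ y * u g = 0.
  rewrite in_finite_support // inE => -[xg _] gh.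
  have [g1 h1] := (lcoset_neq1 normalN Nx xg, lcoset_neq1 normalN Nx xh).
  split; first exact: mul_orth gh g1 h1 (D_unit g) Dy.
  by apply: mul_orth h1 g1 Dy (D_unit g); rewrite eq_sym.
have us := finite_support_uniq 0 (lcoset N x) u.
rewrite /coset_unit mulr_suml mulr_sumr !(bigD1_seq h hs us) /=.
rewrite (identity_mull (unit_u h) Dy) (identity_mulr (unit_u h) Dy).
by rewrite !big1_seq ?addr0 // => g /andP [gh gs]; case: (orth_h g gs gh).
Qed.

Lemma coset_unit_fixes_mul x a b k : ~ N x -> coset_component D N x a ->
  coset_unit x * mul a b k = mul a b k /\ mul a b k * coset_unit x = mul a b k.
Proof.
move=> Nx [[_ Da] xa].
have fixes g t : coset_unit x * (a g * t) = a g * t /\ a g * t * coset_unit x = a g * t.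
  have [->|/xa xg] := eqVneq (a g) 0; first by rewrite !mul0r mulr0.
  exact: coset_unit_fixes Nx xg (idealMr (D_ideal g) t (Da g)).
rewrite /skew_mul mulr_sumr mulr_suml.
by split; apply: eq_bigr => g _; [exact: (fixes _ _).1 | exact: (fixes _ _).2].
Qed.

Lemma coset_setprod_fixes x z : ~ N x ->
  sprod (coset_component D N x) (coset_component D N (ginv x)) z ->
  (forall k, k != gone -> z k = 0) /\
  coset_unit x * z gone = z gone /\ z gone * coset_unit x = z gone.
Proof.
move=> Nx [s [sT ->]] /=; have NVx : ~ N (ginv x) by move/(normalVE normalN).
split=> [k k1|].
  apply: big1_seq => p /andP [_ /sT [xp1 xp2]]; apply: skew_mul_orth k1.
  - by case: xp2.
  - exact: coset_component1 Nx xp1.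
  - exact: coset_component1 NVx xp2.
rewrite mulr_sumr mulr_suml; split; apply: eq_big_seq => p /sT [xp1 _].
  exact: (coset_unit_fixes_mul _ _ Nx xp1).1.
exact: (coset_unit_fixes_mul _ _ Nx xp1).2.
Qed.

Definition coset_section x : G -> R :=
  if `[< N x >] then delta1 1 else patch (fun=> 0) (lcoset N x) u.

Lemma coset_section_component x : coset_component D N x (coset_section x).
Proof.
rewrite /coset_section; case: asboolP => Nx; (split; first split).
- apply: (sub_finite_set _ (finite_set1 gone)) => g; rewrite /= /delta1.
  by case: (g =P gone) => [-> |_]; last rewrite eqxx.
- move=> g; rewrite /delta1; case: (g =P gone) => [->|_]; first exact: D1.
  exact: ideal0 (D_ideal g).
- move=> g; rewrite /delta1; case: (g =P gone) => [-> _|_]; last by rewrite eqxx.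
  exact/(lcoset1 normalN).
- apply: sub_finite_set finite_unit_support => g /=; rewrite /patch.
  case: ifPn => [/set_mem xg ug|]; last by rewrite eqxx.
  by split=> //; exact: (lcoset_neq1 normalN Nx xg).
- by move=> g; rewrite /patch; case: ifP => _; [apply: D_unit | apply: ideal0 (D_ideal g)].
- by move=> g; rewrite /patch; case: ifPn => [/set_mem|]; last by rewrite eqxx.
Qed.

Lemma coset_section_mul x : mul (coset_section x) (coset_section (ginv x)) =
  delta1 (if `[< N x >] then 1 else coset_unit x).
Proof.
rewrite /coset_section; have [Nx|Nx] := asboolP (N x).
  by rewrite asboolT ?skew_mul1l //; apply/(normalVE normalN).
have NVx : ~ N (ginv x) by move/(normalVE normalN).
rewrite (asboolF NVx); apply: funext => k; rewrite /delta1.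
case: eqP => [->|/eqP k1].
  rewrite /skew_mul /coset_unit [RHS]fsbig_mkcond; apply: eq_fsbigr => g _.
  rewrite mulg1 /patch; case: ifPn => [/set_mem xg|_]; last by rewrite mul0r.
  rewrite mem_set; last exact: (lcosetV normalN xg).
  by rewrite (identity_idem (unit_u (ginv g))) alpha_unit (identity_idem (unit_u g)).
have := coset_section_component (ginv x); rewrite /coset_section (asboolF NVx) => xs'.
apply: skew_mul_orth k1; first by case: xs'.
  by rewrite /patch ifN //; apply/negP => /set_mem /(lcoset1 normalN).
exact: coset_component1 NVx xs'.
Qed.

Lemma coset_section_eps x :
  eps_unit mul sprod ginv (coset_component D N) x
    (mul (coset_section x) (coset_section (ginv x))).
Proof.
split; first by apply: skew_setprod_mul; apply: coset_section_component.
move=> z xz; rewrite coset_section_mul; case: asboolP => Nx.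
  rewrite skew_mul1l skew_mul1r //.
  by have [] := skew_setprod_supported (@subset_refl _ _) (@subset_refl _ _) xz.
have [z0 [cz zc]] := coset_setprod_fixes Nx xz.
split; apply: funext => k; rewrite ?skew_mul_delta1l ?skew_mul_delta1r;
  (have [->|/z0 ->] := eqVneq k gone); rewrite ?mulr0 ?mul0r //.
by rewrite invg1 unit1 mulr1 alpha1.
Qed.

Lemma coset_component_strong x :
  sprod (sprod (coset_component D N x) (coset_component D N (ginv x)))
    (coset_component D N x) = coset_component D N x.
Proof.
apply/seteqP; split.
  rewrite !coset_componentE.
  have inner : sprod (supported_in (lcoset N x)) (supported_in (lcoset N (ginv x)))
      `<=` supported_in N.
    exact: subset_trans (skew_setprod_supported (@subset_refl _ _) (@subset_refl _ _))
      (supported_sub (lcoset_mulV normalN (x := x))).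
  exact: subset_trans (skew_setprod_supported inner (@subset_refl _ _))
    (supported_sub (normal_mul_lcoset normalN (x := x))).
move=> z xz; have [eps_in _] := coset_section_eps x.
suff <- : mul (mul (coset_section x) (coset_section (ginv x))) z = z.
  exact: skew_setprod_mul eps_in xz.
rewrite coset_section_mul; case: asboolP => Nx; first exact: skew_mul1l.
apply: funext => k; rewrite skew_mul_delta1l.
have [->|/xz.2 xk] := eqVneq (z k) 0; first by rewrite mulr0.
by case: (coset_unit_fixes Nx xk (xz.1.2 k)).
Qed.

End PartialAction.

Theorem proposition8p3 (G : groupType) (R : pzRingType)
    (D : G -> set R) (alpha : G -> R -> R) (one1 : G -> R) :
  unital_partial_action D alpha ->
  (forall g, is_identity_of (D g) (one1 g)) ->
  (forall g h, g != h -> g != gone -> h != gone -> setprod (D g) (D h) = [set 0]) ->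
  finite_set (range one1) ->
  forall N : set G, normal_subgroup N ->
  epsilon_crossed_product (skew_mul alpha one1) (skew_setprod alpha one1)
    ginv (coset_component D N).
Proof.
move=> pa unit_u D_orth finite_range_u N normalN.
apply: (epsilon_crossed_product_of_section (s := coset_section one1 N)).
- exact: invgK.
- exact: (coset_section_component pa unit_u D_orth finite_range_u normalN).
- exact: (coset_section_eps pa unit_u D_orth finite_range_u normalN).
- exact: (coset_component_strong pa unit_u D_orth finite_range_u normalN).
Qed.
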